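(* Let $f\in\mathbf Q[X]$ be a separable polynomial of degree $2n$. (i) If $f$ is reciprocal, i.e. $f(X)=X^{2n}f(X^{-1})$, then the discriminant of $f$ is a square in $\mathbf Q$ if and only if $(-1)^nf(1)f(-1)$ is a square in $\mathbf Q$. (ii) If $f$ is skew-reciprocal, i.e. $f(X)=(-1)^{2n(2n-1)/2}X^{2n}f(-X^{-1})$, then the discriminant of $f$ is a square in $\mathbf Q$ if and only if $f(\mathrm i)f(-\mathrm i)$ (which is rational) is a square in $\mathbf Q$, where $\mathrm i\in\mathbf C$ is the imaginary unit. *)

From HB Require Import structures.
From mathcomp Require Import all_boot all_order all_algebra all_field.
Set Implicit Arguments. Unset Strict Implicit. Unset Printing Implicit Defensive.
Import Order.TTheory GRing.Theory Num.Theory.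
Local Open Scope ring_scope.

Definition polyC_of (f : {poly rat}) : {poly algC} := map_poly ratr f.

Definition roots_of (f : {poly rat}) : seq algC :=
  sval (closed_field_poly_normal (polyC_of f)).

Definition discriminant (f : {poly rat}) : algC :=
  let r := roots_of f in
  let d := (size f).-1 in
  (ratr (lead_coef f)) ^+ (2 * d - 2) *
  \prod_(i < size r) \prod_(j < size r | (i < j)%N) (r`_i - r`_j) ^+ 2.

Definition is_rat_square (x : algC) : Prop := exists q : rat, x = ratr (q ^+ 2).

Definition reciprocal (n : nat) (f : {poly rat}) : Prop :=
  forall x : rat, x != 0 -> f.[x] = x ^+ (2 * n) * f.[x^-1].

Definition skew_reciprocal (n : nat) (f : {poly rat}) : Prop :=
  forall x : rat, x != 0 ->
    f.[x] = (-1) ^+ (((2 * n) * (2 * n - 1)) %/ 2) * x ^+ (2 * n) * f.[- x^-1].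

From HB Require Import structures.
From mathcomp Require Import all_boot all_order all_algebra all_field.
From mathcomp Require Import ring zify.
Set Implicit Arguments. Unset Strict Implicit. Unset Printing Implicit Defensive.
Import Order.TTheory GRing.Theory Num.Theory.
Local Open Scope ring_scope.

(* Let f in Q[X] be separable of degree 2n with f(X) = e^n X^(2n) f(e/X),
   where e = 1 (reciprocal case) or e = -1 (skew-reciprocal case), and let z be
   a square root of e in algC (z = 1, resp. z = i).  The map x |-> e/x is a
   fixed-point-free involution on the roots of f, so the roots split into n
   pairs {a, e/a}.  Grouping the squared root differences along this pairing
   gives
        prod_(i<j) (r_i - r_j)^2 = prod_a ((a + e/a)^2 - 4e) * W^2,
   where W is the same product for the n pair sums a + e/a, while
        (-e)^n f(z) f(-z) = lc(f)^2 prod_a ((a + e/a)^2 - 4e).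
   W is invariant under every automorphism of algC, hence rational, so the
   discriminant and (-e)^n f(z) f(-z) differ by the square of a nonzero
   rational number. *)

Section NumberFieldConjugates.
Variable L : fieldExtType rat.

(* An element outside Q has a conjugate different from itself, as soon as its
   minimal polynomial splits in L (minimal polynomials are separable in
   characteristic 0). *)
Lemma minPoly_other_root (x : L) (ms : seq L) :
  minPoly 1 x = \prod_(z <- ms) ('X - z%:P) -> x \notin 1%VS ->
  exists2 y, y \in ms & y != x.
Proof.
move=> Dm xQ; apply/hasP; apply: contraNT xQ => /hasPn all_x.
have ums : uniq ms.
  rewrite -separable_prod_XsubC -Dm.
  by apply: pcharf0_separable => a; rewrite (pchar_lalg L) pchar_num.
have xms : x \in ms by rewrite -root_prod_XsubC -Dm root_minPoly.
have sz_ms : size ms = 1%N.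
  apply/eqP; rewrite eqn_leq; apply/andP; split; last by case: (ms) xms.
  suff : (size ms <= size [:: x])%N by [].
  by apply: (uniq_leq_size ums) => z /all_x; rewrite negbK inE.
by rewrite -adjoin_deg_eq1 -eqSS -size_minPoly Dm size_prod_XsubC sz_ms.
Qed.

Lemma kHom_to_conjugate (p : {poly L}) (x y : L) :
  p \is a polyOver 1%VS -> splittingFieldFor 1 p fullv ->
  root (minPoly 1 x) y -> exists2 g : 'End(L), kHom 1 fullv g & g x = y.
Proof.
move=> pQ splitp rooty.
have rooty' : root (map_poly \1%VF (minPoly 1 x)) y.
  by rewrite (map_poly_id (fun z _ => id_lfunE z)).
have homx := kHomExtendP (subvv _) (kHom1 1 1) rooty'.
have splitx : splittingFieldFor <<1; x>> p fullv.
  by apply: splittingFieldForS splitp; [exact: subv_adjoin | exact: subvf].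
have [g homg Dg] := kHom_extends (subv_adjoin 1 x) homx pQ splitx.
by exists g; rewrite // -Dg ?memv_adjoin // (kHomExtend_val (kHom1 1 1)).
Qed.

End NumberFieldConjugates.

Lemma Crat_fixed (x : algC) :
  (forall nu : {rmorphism algC -> algC}, nu x = x) -> x \in Crat.
Proof.
move=> fixx; apply: contraT => xQ.
have [p0 [Dp0 monp0] _] := minCpolyP x.
have [r Dr] := closed_field_poly_normal (map_poly ratr p0 : {poly algC}).
rewrite lead_coef_map (monicP monp0) rmorph1 scale1r in Dr.
have [Qs [QsC [rr Drr genQs]]] := num_field_exists r.
have [xx _ Dxx] : exists2 xx, xx \in rr & QsC xx = x.
  have : x \in r by rewrite -root_prod_XsubC -Dr -Dp0 root_minCpoly.
  by rewrite -Drr => /mapP[xx xxr ->]; exists xx.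
pose p := map_poly (in_alg Qs) p0.
have Dp : map_poly QsC p = map_poly ratr p0.
  rewrite -map_poly_comp; apply: eq_map_poly => a.
  by rewrite /= rmorphZ_num rmorph1 mulr1.
have Dp' : p = \prod_(z <- rr) ('X - z%:P).
  apply: (map_poly_inj QsC); rewrite Dp Dr -Drr big_map rmorph_prod /=.
  by apply: eq_bigr => z _; rewrite /= map_polyXsubC.
have pQ : p \is a polyOver 1%VS by apply/polyOver1P; exists p0.
have rootp : root p xx by rewrite -(fmorph_root QsC) Dp Dxx -Dp0 root_minCpoly.
have := minPoly_dvdp pQ rootp; rewrite Dp' => /dvdp_prod_XsubC[m Dm].
have {}Dm : minPoly 1 xx = \prod_(z <- mask m rr) ('X - z%:P).
  by apply/eqP; rewrite -eqp_monic ?monic_minPoly ?monic_prod_XsubC.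
have xxQ : xx \notin 1%VS.
  apply: contra xQ => /vlineP[a Da].
  by rewrite -Dxx Da alg_num_field fmorph_rat Crat_rat.
have [yy yym yyx] := minPoly_other_root Dm xxQ.
have splitp : splittingFieldFor 1 p fullv.
  by exists rr; [rewrite Dp' eqpxx | exact: genQs].
have rootyy : root (minPoly 1 xx) yy by rewrite Dm root_prod_XsubC.
have [g homg gxx] := kHom_to_conjugate pQ splitp rootyy.
pose gR : {lrmorphism _ -> _} := HB.pack (fun_of_lfun g)
  (GRing.isMonoidMorphism.Build _ _ _ (elimT kHom_monoid_morphism homg)).
have [nu Dnu] := extend_algC_subfield_aut QsC gR.
have := fixx nu; rewrite -Dxx -Dnu /= gxx => /(fmorph_inj QsC) yyE.
by rewrite yyE eqxx in yyx.
Qed.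

Section SquaredDifferences.
Variable R : comPzRingType.

Fixpoint sqdiff (s : seq R) : R :=
  if s is a :: s' then \prod_(y <- s') (a - y) ^+ 2 * sqdiff s' else 1.

Lemma sqdiffE (s : seq R) :
  \prod_(i < size s) \prod_(j < size s | (i < j)%N) (s`_i - s`_j) ^+ 2 =
  sqdiff s.
Proof.
elim: s => [|a s IH] /=; first by rewrite big_ord0.
rewrite big_ord_recl -IH; congr (_ * _).
  rewrite big_mkcond big_ord_recl /= mul1r (big_nth 0) big_mkord.
  by apply: eq_bigr.
apply: eq_bigr => i _; rewrite big_mkcond big_ord_recl /= mul1r [RHS]big_mkcond.
by apply: eq_bigr.
Qed.

Lemma sqdiff_cat_cons (t1 t2 : seq R) (a : R) :
  sqdiff (t1 ++ a :: t2) = \prod_(y <- t1 ++ t2) (a - y) ^+ 2 * sqdiff (t1 ++ t2).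
Proof.
elim: t1 => [|b t1 IH] //=.
rewrite IH !big_cons !big_cat /= big_cons -[(b - a) ^+ 2]sqrrN opprB.
ring.
Qed.

Lemma sqdiff_perm (s t : seq R) : perm_eq s t -> sqdiff s = sqdiff t.
Proof.
elim: s t => [|a s IH] t pst.
  by rewrite perm_sym in pst; move/perm_nilP: pst => ->.
have ta : a \in t by rewrite -(perm_mem pst) mem_head.
move: pst; case/splitPr: ta => t1 t2 pst.
have pst' : perm_eq s (t1 ++ t2).
  by rewrite -(perm_cons a); apply: (perm_trans pst); rewrite -cat1s perm_catCA.
by rewrite sqdiff_cat_cons /= (IH _ pst') (perm_big _ pst').
Qed.

End SquaredDifferences.

Lemma sqdiff_map (R S : comPzRingType) (g : {rmorphism R -> S}) (s : seq R) :
  g (sqdiff s) = sqdiff (map g s).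
Proof.
elim: s => [|a s IH] /=; first by rewrite rmorph1.
rewrite rmorphM IH rmorph_prod big_map; congr (_ * _).
by apply: eq_bigr => y _; rewrite rmorphXn rmorphB.
Qed.

Lemma sqdiff_neq0 (R : idomainType) (s : seq R) : uniq s -> sqdiff s != 0.
Proof.
elim: s => [|a s IH] /=; first by rewrite oner_eq0.
move=> /andP[aS us]; rewrite mulf_neq0 ?IH // prodf_seq_neq0.
apply/allP => y ys /=; rewrite expf_neq0 // subr_eq0.
by apply: contraNneq aS => ->.
Qed.

Lemma sqr_eq1_neq0 (R : nzRingType) (e : R) : e ^+ 2 = 1 -> e != 0.
Proof.
move=> e2; apply/eqP => e0; move: e2; rewrite e0 expr0n => /eqP.
by rewrite eq_sym oner_eq0.
Qed.

Section RootPairs.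
Variables (L : fieldType) (e : L).
Hypothesis e2 : e ^+ 2 = 1.

Lemma sign_cases : e = 1 \/ e = -1.
Proof. by have /eqP := e2; rewrite sqrf_eq1 => /orP[]/eqP; [left | right]. Qed.

Lemma partnerK x : x != 0 -> e / (e / x) = x.
Proof. by move=> x0; rewrite divKr ?unitfE ?(sqr_eq1_neq0 e2). Qed.

Definition pair_sum (a : L) : L := a + e / a.

Lemma pair_sum_partner a : a != 0 -> pair_sum (e / a) = pair_sum a.
Proof. by move=> a0; rewrite /pair_sum partnerK // addrC. Qed.

Definition unfold_pairs (A : seq L) : seq L :=
  flatten [seq [:: a; e / a] | a <- A].

Lemma unfold_pairs_cons a A :
  unfold_pairs (a :: A) = [:: a, e / a & unfold_pairs A].
Proof. by []. Qed.

Lemma mem_unfold_pairs A a : a \in A -> a \in unfold_pairs A.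
Proof.
elim: A => [|b A IH] //; rewrite inE unfold_pairs_cons !inE.
by case/orP=> [->|/IH->]; rewrite ?orbT.
Qed.

Lemma big_unfold_pairs (F : L -> L) A :
  \prod_(y <- unfold_pairs A) F y = \prod_(a <- A) (F a * F (e / a)).
Proof.
elim: A => [|a A IH]; first by rewrite !big_nil.
by rewrite unfold_pairs_cons !big_cons IH mulrA.
Qed.

Fixpoint pair_reps (k : nat) (s : seq L) : seq L :=
  if k is k'.+1 then
    (if s is a :: s' then a :: pair_reps k' (rem (e / a) s') else [::])
  else [::].

Lemma pair_repsP k s : size s = (2 * k)%N -> uniq s ->
  (forall x, x \in s -> [/\ x != 0, e / x \in s & e / x != x]) ->
  perm_eq s (unfold_pairs (pair_reps k s)) /\ size (pair_reps k s) = k.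
Proof.
elim: k s => [|k IH] [|a s'] //= sz /andP[as' us'] cl.
have [a0 ya ya'] := cl a (mem_head _ _).
have ys' : e / a \in s' by move: ya; rewrite inE (negPf ya').
set s'' := rem (e / a) s'.
have sz'' : size s'' = (2 * k)%N by move: sz; rewrite size_rem // mulnS => -[->].
have cl'' x : x \in s'' -> [/\ x != 0, e / x \in s'' & e / x != x].
  rewrite mem_rem_uniq // inE => /andP[xy xs'].
  have [x0 ex ex'] : [/\ x != 0, e / x \in a :: s' & e / x != x].
    by apply: cl; rewrite inE xs' orbT.
  split => //.
  have xa : x != a by apply: contraNneq as' => <-.
  rewrite mem_rem_uniq // inE; apply/andP; split.
    by apply: contra xa => /eqP Dx; rewrite -(partnerK x0) Dx partnerK.
  move: ex; rewrite inE => /orP[/eqP Dx|//].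
  by move: xy; rewrite -Dx partnerK // eqxx.
have [IHp IHs] := IH s'' sz'' (rem_uniq _ us') cl''.
split; last by rewrite IHs.
rewrite unfold_pairs_cons perm_cons.
by apply: (perm_trans (perm_to_rem ys')); rewrite perm_cons.
Qed.

Lemma cross_pair_diffs a b : a != 0 -> b != 0 ->
  ((a - b) * (e / a - b)) ^+ 2 * ((a - e / b) * (e / a - e / b)) ^+ 2 =
  (pair_sum a - pair_sum b) ^+ 4.
Proof.
by move=> a0 b0; rewrite /pair_sum; case: sign_cases => ->; field; rewrite ?a0 ?b0.
Qed.

Lemma inner_pair_diff a : a != 0 -> (a - e / a) ^+ 2 = pair_sum a ^+ 2 - 4 * e.
Proof. by move=> a0; rewrite /pair_sum; case: sign_cases => ->; field; rewrite a0. Qed.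

Lemma sqdiff_unfold_pairs A : all (fun a => a != 0) A ->
  sqdiff (unfold_pairs A) =
  \prod_(a <- A) (pair_sum a ^+ 2 - 4 * e) * sqdiff (map pair_sum A) ^+ 2.
Proof.
elim: A => [|a A IH]; first by rewrite /= big_nil mul1r expr1n.
move=> /andP[a0 A0]; rewrite unfold_pairs_cons /= big_cons IH // big_cons.
have cross : \prod_(y <- unfold_pairs A) (a - y) ^+ 2 *
    \prod_(y <- unfold_pairs A) (e / a - y) ^+ 2 =
    (\prod_(c <- map pair_sum A) (pair_sum a - c) ^+ 2) ^+ 2.
  rewrite -big_split /= big_unfold_pairs -prodrXl big_map.
  apply: eq_big_seq => b bA /=; have b0 : b != 0 by move/allP: A0 => /(_ b bA).
  by rewrite -!exprMn -exprM -(cross_pair_diffs a0 b0); ring.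
rewrite (inner_pair_diff a0) exprMn -cross; ring.
Qed.

Lemma pair_eval_pm z a : z ^+ 2 = e -> a != 0 ->
  ((z - a) * (z - e / a)) * ((- z - a) * (- z - e / a)) =
  - e * (pair_sum a ^+ 2 - 4 * e).
Proof.
move=> z2 a0; rewrite /pair_sum.
have -> : ((z - a) * (z - e / a)) * ((- z - a) * (- z - e / a)) =
    (z ^+ 2 + e) ^+ 2 - (a + e / a) ^+ 2 * z ^+ 2 by field; rewrite a0.
by rewrite z2; case: sign_cases => ->; ring.
Qed.

Lemma eval_unfold_pairs z A : z ^+ 2 = e -> all (fun a => a != 0) A ->
  \prod_(y <- unfold_pairs A) (z - y) * \prod_(y <- unfold_pairs A) (- z - y) =
  (- e) ^+ size A * \prod_(a <- A) (pair_sum a ^+ 2 - 4 * e).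
Proof.
move=> z2; elim: A => [|a A IH]; first by rewrite !big_nil mulr1.
move=> /andP[a0 A0]; rewrite unfold_pairs_cons !big_cons /= exprS.
set Pz := \prod_(y <- _) (z - y); set Pmz := \prod_(y <- _) (- z - y).
transitivity (((z - a) * (z - e / a)) * ((- z - a) * (- z - e / a)) * (Pz * Pmz)).
  by ring.
rewrite pair_eval_pm // IH //; ring.
Qed.

(* The pair sums are determined by the multiset unfold_pairs A: each occurs
   there exactly twice as often as in map pair_sum A. *)
Lemma count_unfold_pairs A (P : pred L) : all (fun a => a != 0) A ->
  count P (map pair_sum (unfold_pairs A)) = (2 * count P (map pair_sum A))%N.
Proof.
elim: A => [|a A IH] // /andP[a0 A0].
rewrite unfold_pairs_cons /= IH // pair_sum_partner //.
by rewrite !mul2n doubleD addnA addnn.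
Qed.

Lemma sqdiff_pair_sums_perm A B :
  all (fun a => a != 0) A -> all (fun a => a != 0) B ->
  perm_eq (unfold_pairs A) (unfold_pairs B) ->
  sqdiff (map pair_sum A) = sqdiff (map pair_sum B).
Proof.
move=> A0 B0 pAB; apply: sqdiff_perm; apply/permP => P.
have /permP/(_ P) := perm_map pair_sum pAB.
by rewrite !count_unfold_pairs // => /eqP; rewrite eqn_pmul2l // => /eqP.
Qed.

End RootPairs.

Lemma map_unfold_pairs (L L' : fieldType) (g : {rmorphism L -> L'}) e A :
  map g (unfold_pairs e A) = unfold_pairs (g e) (map g A).
Proof. by elim: A => [|a A IH] //=; rewrite IH fmorph_div. Qed.

Lemma map_pair_sum (L L' : fieldType) (g : {rmorphism L -> L'}) e a :
  g (pair_sum e a) = pair_sum (g e) (g a).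
Proof. by rewrite /pair_sum rmorphD fmorph_div. Qed.

Section TwistedReverse.
Variables (L : fieldType) (e : L) (n : nat).
Hypothesis e2 : e ^+ 2 = 1.

(* The polynomial sum_(i <= 2n) e^(n+i) f_(2n-i) X^i; for e = 1 this is the
   reverse of f in degree 2n, for e = -1 the reverse of f(-X) up to sign.
   The (skew-)reciprocal polynomials are its fixed points. *)
Definition twisted_reverse (f : {poly L}) : {poly L} :=
  \poly_(i < (2 * n).+1) (e ^+ (n + i) * f`_(2 * n - i)).

Lemma coef_twisted_reverse (f : {poly L}) k : (k <= 2 * n)%N ->
  (twisted_reverse f)`_k = e ^+ (n + k) * f`_(2 * n - k).
Proof. by move=> kle; rewrite coef_poly ltnS kle. Qed.

Lemma sign_exp_sub i : (i <= 2 * n)%N -> e ^+ (2 * n - i) = e ^+ i.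
Proof.
move=> ile; apply: (mulIf (expf_neq0 i (sqr_eq1_neq0 e2))).
rewrite -!exprD subnK // addnn -mul2n.
by rewrite !exprM e2 !expr1n.
Qed.

Lemma horner_twisted_reverse (f : {poly L}) x : (size f <= (2 * n).+1)%N -> x != 0 ->
  (twisted_reverse f).[x] = e ^+ n * x ^+ (2 * n) * f.[e / x].
Proof.
move=> szf x0; rewrite horner_poly (horner_coef_wide _ szf) mulr_sumr.
rewrite (reindex_inj rev_ord_inj); apply: eq_bigr => -[i ilt] _ /=.
have ile : (i <= 2 * n)%N by [].
rewrite subSS subKn // exprD sign_exp_sub // -{2}(subnK ile) exprD expr_div_n.
by field; rewrite expf_neq0.
Qed.

End TwistedReverse.

Lemma map_twisted_reverse (L L' : fieldType) (g : {rmorphism L -> L'}) e n f :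
  map_poly g (twisted_reverse e n f) = twisted_reverse (g e) n (map_poly g f).
Proof.
apply/polyP => k; rewrite coef_map /twisted_reverse !(coef_poly (2 * n).+1).
case: ltnP => _; last exact: rmorph0.
by rewrite coef_map -rmorphXn -rmorphM.
Qed.

Section PalindromicCharZero.
Variables (L : numFieldType) (e : L) (n : nat).
Hypothesis e2 : e ^+ 2 = 1.

Lemma twisted_reverse_fixed (f : {poly L}) : (size f <= (2 * n).+1)%N ->
  (forall x, x != 0 -> f.[x] = e ^+ n * x ^+ (2 * n) * f.[e / x]) ->
  twisted_reverse e n f = f.
Proof.
move=> szf Hf; apply/eqP; rewrite -subr_eq0; apply: contraT => d0.
pose xs : seq L := [seq i.+1%:R | i <- iota 0 (2 * n).+1].
have uxs : uniq xs.
  by rewrite map_inj_uniq ?iota_uniq // => a b /eqP; rewrite eqr_nat eqSS => /eqP.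
have rxs : all (root (twisted_reverse e n f - f)) xs.
  apply/allP => _ /mapP[i _ ->]; have i0 : i.+1%:R != 0 :> L by rewrite pnatr_eq0.
  by rewrite /root hornerD hornerN horner_twisted_reverse // -Hf // subrr.
have := max_poly_roots d0 rxs uxs; rewrite size_map size_iota ltnNge.
move=> /negP[]; apply: (leq_trans (size_polyD _ _)).
by rewrite geq_max size_polyN szf size_poly.
Qed.

Lemma twisted_reverse_deriv (f : {poly L}) x : (size f <= (2 * n).+1)%N ->
  twisted_reverse e n f = f -> x ^+ 2 = e -> root f x -> f^`().[x] = 0.
Proof.
move=> szf Df x2 /rootP fx.
have x0 : x != 0.
  by apply: contra_neq (sqr_eq1_neq0 e2) => x0; rewrite -x2 x0 expr0n.
have Hc k : (k <= 2 * n)%N -> f`_k = e ^+ (n + k) * f`_(2 * n - k).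
  by move=> kle; rewrite -{1}Df coef_twisted_reverse.
have coefD k : (f^`() * 'X)`_k = f`_k *+ k.
  by rewrite coefMX coef_deriv; case: k => [|k] //=; rewrite mulr0n.
have szX : (size (f^`() * 'X)%R <= (2 * n).+1)%N.
  apply/leq_sizeP => j hj; rewrite coefD.
  by move/leq_sizeP: szf => -> //; rewrite mul0rn.
(* S = x f'(x) equals both sum_i i f_i x^i and sum_i (2n - i) f_i x^i. *)
set S := \sum_(i < (2 * n).+1) f`_i *+ i * x ^+ i.
have DS : f^`().[x] * x = S.
  rewrite -hornerMX (horner_coef_wide _ szX).
  by apply: eq_bigr => i _; rewrite coefD.
have DS' : S = \sum_(i < (2 * n).+1) f`_i *+ (2 * n - i) * x ^+ i.
  rewrite /S (reindex_inj rev_ord_inj); apply: eq_bigr => -[i ilt] _ /=.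
  have ile : (i <= 2 * n)%N by [].
  set m := (2 * n - i)%N; rewrite subSS -/m (Hc _ (leq_subr i _)) subKn //.
  have -> : x ^+ i = e ^+ (n + m) * x ^+ m.
    apply: (mulIf (expf_neq0 m x0)); rewrite -exprD subnKC // -mulrA -exprMn.
    rewrite -expr2 x2 exprD -mulrA -exprMn -expr2 e2 expr1n mulr1.
    by rewrite exprM x2.
  by rewrite mulrnAl; ring.
have : S *+ 2 = 0.
  rewrite mulr2n {1}DS' /S -big_split /=.
  transitivity ((\sum_(i < (2 * n).+1) f`_i * x ^+ i) *+ (2 * n)).
    rewrite -sumrMnl; apply: eq_bigr => -[i ilt] _ /=.
    by rewrite -mulrDl -mulrnDr subnK // mulrnAl.
  by rewrite -(horner_coef_wide _ szf) fx mul0rn.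
by move/eqP; rewrite mulrn_eq0 /= -DS mulf_eq0 (negPf x0) orbF => /eqP.
Qed.

End PalindromicCharZero.

Lemma roots_ofE (f : {poly rat}) :
  polyC_of f = ratr (lead_coef f) *: \prod_(r <- roots_of f) ('X - r%:P).
Proof.
have Df := svalP (closed_field_poly_normal (polyC_of f)).
by rewrite -/(roots_of f) /polyC_of lead_coef_map in Df.
Qed.

Lemma roots_of_aut (f : {poly rat}) (nu : {rmorphism algC -> algC}) :
  f != 0 -> perm_eq (map nu (roots_of f)) (roots_of f).
Proof.
move=> f0; have c0 : ratr (lead_coef f) != 0 :> algC.
  by rewrite fmorph_eq0 lead_coef_eq0.
apply: prod_XsubC_eq; apply: (scalerI c0); rewrite -roots_ofE.
have /(congr1 (map_poly nu)) := roots_ofE f.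
rewrite /polyC_of map_polyZ fmorph_rat -map_poly_comp.
rewrite (eq_map_poly (fmorph_rat nu)) rmorph_prod big_map => ->.
by congr (_ *: _); apply: eq_bigr => x _; rewrite /= map_polyXsubC.
Qed.

Lemma discriminantE (f : {poly rat}) :
  discriminant f =
  ratr (lead_coef f) ^+ (2 * (size f).-1 - 2) * sqdiff (roots_of f).
Proof. by rewrite /discriminant sqdiffE. Qed.

Lemma expr_lead_split (K : fieldType) (n : nat) (c : K) : c != 0 ->
  c ^+ (2 * (2 * n) - 2) = c ^+ 2 * (c ^+ (2 * n - 1) / c) ^+ 2.
Proof.
move=> c0; case: n => [|m].
  by rewrite muln0 sub0n expr0 div1r exprVn mulfV ?expf_neq0.
have -> : (2 * (2 * m.+1) - 2 = (2 * m + 2 * m) + 2)%N by lia.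
have -> : (2 * m.+1 - 1 = (2 * m).+1)%N by lia.
by rewrite [c ^+ (2 * m).+1]exprSr mulfK // !exprD; ring.
Qed.

Lemma is_rat_square_mul_sq (x g : algC) : g \in Crat -> g != 0 ->
  is_rat_square (x * g ^+ 2) <-> is_rat_square x.
Proof.
move=> /CratP[r ->]; rewrite fmorph_eq0 => r0.
split=> -[q Dq]; last by exists (q * r); rewrite Dq -rmorphXn -rmorphM exprMn.
exists (q / r); apply: (mulIf (expf_neq0 2 (_ : ratr r != 0))).
  by rewrite fmorph_eq0.
by rewrite Dq -!rmorphXn -rmorphM; congr ratr; field.
Qed.

Section PalindromicDiscriminant.
Variables (f : {poly rat}) (n : nat) (e : rat) (z : algC).
Hypotheses (e2 : e ^+ 2 = 1) (sepf : separable_poly f).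
Hypotheses (szf : size f = (2 * n).+1) (palf : twisted_reverse e n f = f).
Hypothesis z2 : z ^+ 2 = ratr e.

Let E : algC := ratr e.
Let F : {poly algC} := polyC_of f.
Let c : algC := ratr (lead_coef f).
Let s : seq algC := roots_of f.

Let E2 : E ^+ 2 = 1. Proof. by rewrite /E -rmorphXn e2 rmorph1. Qed.
Let E0 : E != 0. Proof. exact: sqr_eq1_neq0. Qed.
Let f0 : f != 0. Proof. by rewrite -size_poly_gt0 szf. Qed.
Let c0 : c != 0. Proof. by rewrite fmorph_eq0 lead_coef_eq0. Qed.
Let szF : (size F <= (2 * n).+1)%N. Proof. by rewrite size_map_poly szf. Qed.
Let palF : twisted_reverse E n F = F.
Proof. by rewrite -map_twisted_reverse palf. Qed.
Let rootF x : root F x = (x \in s).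
Proof. by rewrite /F roots_ofE rootZ // root_prod_XsubC. Qed.

(* The roots come in pairs {x, e/x} of distinct nonzero roots: x = 0 is not a
   root because F(0) = e^n lc(F), e/x is a root by the functional equation, and
   e/x = x would make x a multiple root. *)
Lemma roots_paired x : x \in s -> [/\ x != 0, E / x \in s & E / x != x].
Proof.
rewrite -rootF => Fx; have F0 : F.[0] != 0.
  rewrite horner_coef0 -palF coef_twisted_reverse // subn0 mulf_neq0 //.
    by rewrite expf_neq0.
  by rewrite /F coef_map fmorph_eq0 [(2 * n)%N]pred_Sn -szf -lead_coefE lead_coef_eq0.
have x0 : x != 0 by apply/eqP => x0; move: F0; rewrite -{1}x0 (rootP Fx) eqxx.
split => //.
  rewrite -rootF; apply/rootP; rewrite -palF horner_twisted_reverse //.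
    by rewrite partnerK // (rootP Fx) mulr0.
  by rewrite mulf_neq0 ?invr_eq0.
apply/eqP => Dx; have x2 : x ^+ 2 = E by rewrite expr2 -{2}Dx mulrCA divff ?mulr1.
have : separable_poly F by rewrite separable_map.
rewrite unlock => /coprimep_root/(_ Fx).
by rewrite (twisted_reverse_deriv E2 szF palF x2 Fx) eqxx.
Qed.

Let szs : size s = (2 * n)%N.
Proof.
have : size F = (2 * n).+1 by rewrite size_map_poly.
by rewrite /F roots_ofE size_scale // size_prod_XsubC => -[].
Qed.

Let us : uniq s.
Proof.
have : separable_poly F by rewrite separable_map.
by rewrite /F roots_ofE (eqp_separable (eqp_scale _ c0)) separable_prod_XsubC.
Qed.

Let A : seq algC := pair_reps E n s.

Let pairing : perm_eq s (unfold_pairs E A) /\ size A = n.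
Proof. exact (pair_repsP E2 szs us roots_paired). Qed.

Let A0 : all (fun a => a != 0) A.
Proof.
apply/allP => a aA; have : a \in s by rewrite (perm_mem pairing.1) mem_unfold_pairs.
by case/roots_paired.
Qed.

Let P : algC := \prod_(a <- A) (pair_sum E a ^+ 2 - 4 * E).
Let W : algC := sqdiff (map (pair_sum E) A).

Lemma sqdiff_roots_paired : sqdiff s = P * W ^+ 2.
Proof. by rewrite (sqdiff_perm pairing.1) sqdiff_unfold_pairs. Qed.

Lemma eval_pm_roots_paired : (- E) ^+ n * (F.[z] * F.[- z]) = c ^+ 2 * P.
Proof.
rewrite /F roots_ofE -/c -/s !hornerZ !horner_prod.
under eq_bigr do rewrite hornerXsubC.
under [X in _ * (_ * X)]eq_bigr do rewrite hornerXsubC.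
rewrite !(perm_big _ pairing.1) /=.
transitivity (c ^+ 2 * ((- E) ^+ n * (\prod_(i <- unfold_pairs E A) (z - i) *
                 \prod_(i <- unfold_pairs E A) (- z - i)))); first by ring.
have sgn : (- E) ^+ n * (- E) ^+ n = 1 by rewrite -exprMn mulrNN -expr2 E2 expr1n.
by rewrite eval_unfold_pairs // pairing.2 [(- E) ^+ n * _]mulrA sgn mul1r.
Qed.

(* W is a symmetric function of the pair sums, hence fixed by the Galois
   action on the roots, hence rational. *)
Lemma pair_sums_sqdiff_rat : W \in Crat.
Proof.
apply: Crat_fixed => nu; have nuE : nu E = E by rewrite fmorph_rat.
rewrite /W sqdiff_map -map_comp.
rewrite (eq_map (_ : nu \o pair_sum E =1 pair_sum E \o nu)); last first.
  by move=> a; rewrite /= map_pair_sum nuE.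
rewrite map_comp; apply: sqdiff_pair_sums_perm => //.
  by rewrite all_map; apply: sub_all A0 => a /=; rewrite fmorph_eq0.
rewrite -[E in unfold_pairs E _]nuE -map_unfold_pairs.
have pAs : perm_eq (unfold_pairs E A) s by rewrite perm_sym; exact: pairing.1.
exact (perm_trans (perm_map nu pAs) (perm_trans (roots_of_aut nu f0) pairing.1)).
Qed.

Lemma discriminant_palindromic :
  discriminant f =
  (- E) ^+ n * (F.[z] * F.[- z]) * (c ^+ (2 * n - 1) / c * W) ^+ 2.
Proof.
rewrite discriminantE szf -/c -/s sqdiff_roots_paired mulrA.
by rewrite eval_pm_roots_paired (expr_lead_split n c0); ring.
Qed.

Lemma discriminant_square_palindromic :
  is_rat_square (discriminant f) <-> is_rat_square ((- E) ^+ n * (F.[z] * F.[- z])).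
Proof.
rewrite discriminant_palindromic is_rat_square_mul_sq //.
  by rewrite rpredM ?pair_sums_sqdiff_rat // rpred_div ?rpredX // Crat_rat.
have := sqdiff_neq0 us; rewrite sqdiff_roots_paired mulf_eq0 negb_or => /andP[_].
by rewrite expf_eq0 /= => W0; rewrite !mulf_neq0 ?invr_eq0 ?expf_neq0.
Qed.

End PalindromicDiscriminant.

Lemma is_rat_square_ratr (r : rat) :
  is_rat_square (ratr r) <-> exists q : rat, r = q ^+ 2.
Proof. by split=> -[q Dq]; exists q; [apply: fmorph_inj Dq | rewrite Dq]. Qed.

Lemma skew_sign (n : nat) :
  (-1) ^+ (2 * n * (2 * n - 1) %/ 2) = (-1) ^+ n :> rat.
Proof.
rewrite -signr_odd -[in RHS]signr_odd -mulnA mulKn // oddM.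
by case: n => //= m; rewrite mulnS subSS subn0 /= oddM andbT.
Qed.

Unset Implicit Arguments.

Theorem lemma2p2 (n : nat) (f : {poly rat}) :
  separable_poly f -> size f = (2 * n).+1 ->
  (reciprocal n f ->
     (is_rat_square (discriminant f) <->
      exists q : rat, (-1) ^+ n * f.[1] * f.[-1] = q ^+ 2)) /\
  (skew_reciprocal n f ->
     (is_rat_square (discriminant f) <->
      is_rat_square ((polyC_of f).['i] * (polyC_of f).[- 'i]))).
Proof.
move=> sepf szf; have szf' : (size f <= (2 * n).+1)%N by rewrite szf.
split => [recf | skewf].
  have palf : twisted_reverse 1 n f = f.
    apply: (twisted_reverse_fixed (expr1n _ 2) szf') => x x0.
    by rewrite expr1n mul1r div1r; apply: recf.
  have z2 : 1 ^+ 2 = ratr 1 :> algC by rewrite rmorph1 expr1n.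
  rewrite (discriminant_square_palindromic (expr1n _ 2) sepf szf palf z2).
  rewrite -is_rat_square_ratr !rmorphM rmorphXn -!horner_map.
  by rewrite !rmorphN1 !rmorph1 mulrA.
have sqrN1 : (-1) ^+ 2 = 1 :> rat by rewrite sqrrN expr1n.
have palf : twisted_reverse (-1) n f = f.
  apply: (twisted_reverse_fixed sqrN1 szf') => x x0.
  by rewrite -skew_sign mulNr div1r; apply: skewf.
have z2 : 'i ^+ 2 = ratr (-1) :> algC by rewrite sqrCi rmorphN1.
rewrite (discriminant_square_palindromic sqrN1 sepf szf palf z2).
by rewrite rmorphN1 opprK expr1n mul1r.
Qed.
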